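(* Let $\mathcal{M}$ be an episodic MDP with rewards in $[0,1]$ and deterministic expert $\pi^{\operatorname{E}}$. Let $\widehat P$ be a (random) transition model, $\widetilde d=(\widetilde d_h)_{h\le H}$ with $\widetilde d_h:\mathcal{S}\times\mathcal{A}\to\mathbb{R}$ a (random) estimator, and $\bar\pi$ a policy. Suppose: (a) with probability at least $1-\delta_{\operatorname{RFE}}$, for every reward function $w=(w_h)$ with $w_h:\mathcal{S}\times\mathcal{A}\to[-1,1]$ and every policy $\pi$, $|V^{\pi,P,w}-V^{\pi,\widehat P,w}|\le\varepsilon_{\operatorname{RFE}}$; (b) with probability at least $1-\delta_{\operatorname{EST}}$, $\sum_{h=1}^H\|\widetilde d_h-d_h^{\pi^{\operatorname{E}}}\|_1\le\varepsilon_{\operatorname{EST}}$; (c) $\sum_{h=1}^H\|\widetilde d_h-d_h^{\bar\pi,\widehat P}\|_1\le\min_{\pi\in\Pi}\sum_{h=1}^H\|\widetilde d_h-d_h^{\pi,\widehat P}\|_1+\varepsilon_{\mathrm{opt}}$. Then with probability at least $1-\delta_{\operatorname{EST}}-\delta_{\operatorname{RFE}}$, $V^{\pi^{\operatorname{E}}}-V^{\bar\pi}\le2\varepsilon_{\operatorname{EST}}+2\varepsilon_{\operatorname{RFE}}+\varepsilon_{\mathrm{opt}}$.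
   Context: Episodic MDP $(\mathcal{S},\mathcal{A},P,r,H,\rho)$, $\mathcal{S},\mathcal{A}$ finite, $r_h:\mathcal{S}\times\mathcal{A}\to[0,1]$, transitions $P_h(\cdot|s,a)$, initial distribution $\rho$. Policies $\pi=(\pi_h)$, $\pi_h:\mathcal{S}\to\Delta(\mathcal{A})$; $\Pi$ all policies. For a transition model $Q=(Q_h)$, $d_h^{\pi,Q}(s,a)$ is the probability of $(s_h,a_h)=(s,a)$ when running $\pi$ from $s_1\sim\rho$ with $s_{h+1}\sim Q_h(\cdot|s_h,a_h)$; $d_h^\pi=d_h^{\pi,P}$. $V^{\pi,Q,w}=\sum_h\sum_{(s,a)}d_h^{\pi,Q}(s,a)w_h(s,a)$ and $V^\pi=V^{\pi,P,r}$. $\|\cdot\|_1$ is the $\ell_1$ norm over $\mathcal{S}\times\mathcal{A}$. *)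

From HB Require Import structures.
From mathcomp Require Import all_boot all_order all_algebra.
From mathcomp Require Import all_classical all_reals.
From mathcomp Require Import ereal measure probability.
Set Implicit Arguments. Unset Strict Implicit. Unset Printing Implicit Defensive.
Import Order.TTheory GRing.Theory Num.Theory.
Local Open Scope ring_scope.

Section MDP.
Variables (R : realType) (S A : finType).

Definition is_dist (T : finType) (p : T -> R) : Prop :=
  (forall x, 0 <= p x) /\ \sum_(x : T) p x = 1.

(* transition model Q_h(. | s, a) (steps indexed by nat, step h = 0..H-1) *)
Definition is_transition (Q : nat -> S -> A -> S -> R) : Prop :=
  forall h s a, is_dist (Q h s a).

Definition is_policy (pi : nat -> S -> A -> R) : Prop :=
  forall h s, is_dist (pi h s).

Definition det_policy (piE : nat -> S -> A) : nat -> S -> A -> R :=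
  fun h s a => if a == piE h s then 1 else 0.

Fixpoint state_dist (rho : S -> R) (Q : nat -> S -> A -> S -> R)
    (pi : nat -> S -> A -> R) (h : nat) : S -> R :=
  match h with
  | 0 => rho
  | h'.+1 => fun s' => \sum_(s : S) \sum_(a : A)
                state_dist rho Q pi h' s * pi h' s a * Q h' s a s'
  end.

Definition occ (rho : S -> R) (Q : nat -> S -> A -> S -> R)
    (pi : nat -> S -> A -> R) (h : nat) (s : S) (a : A) : R :=
  state_dist rho Q pi h s * pi h s a.

Definition value (H : nat) (rho : S -> R) (Q : nat -> S -> A -> S -> R)
    (pi : nat -> S -> A -> R) (w : nat -> S -> A -> R) : R :=
  \sum_(h < H) \sum_(s : S) \sum_(a : A) occ rho Q pi h s a * w h s a.

Definition l1 (f : S -> A -> R) : R := \sum_(s : S) \sum_(a : A) `|f s a|.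

Definition occ_dist (H : nat) (dt : nat -> S -> A -> R) (rho : S -> R)
    (Q : nat -> S -> A -> S -> R) (pi : nat -> S -> A -> R) : R :=
  \sum_(h < H) l1 (fun s a => dt h s a - occ rho Q pi h s a).

End MDP.
Arguments det_policy {R S A} piE h s a.

From HB Require Import structures.
From mathcomp Require Import all_boot all_order all_algebra.
From mathcomp Require Import all_classical all_reals.
From mathcomp Require Import ereal measure probability.
From mathcomp Require Import lra.
Set Implicit Arguments. Unset Strict Implicit. Unset Printing Implicit Defensive.
Import Order.TTheory GRing.Theory Num.Theory.
Local Open Scope ring_scope.
Local Open Scope classical_set_scope.

(* The gap V^E - V^bar splits into <d^E - d^{bar,Phat}, r> plus the model
   error of pibar, at most eps_RFE by (a).  Pairings with rewards in [-1, 1]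
   are bounded by l1 distances, so passing through dt the first term is at
   most eps_EST + ||dt - d^{bar,Phat}||, which by (c) is at most
   ||dt - d^{E,Phat}|| + eps_opt <= eps_EST + ||d^E - d^{E,Phat}|| + eps_opt.
   That last distance is the expert's value gap between P and Phat for the
   sign reward sg(d^E - d^{E,Phat}), hence again at most eps_RFE by (a). *)

Lemma mulr_le_norm (R : realDomainType) (x w : R) : -1 <= w <= 1 -> x * w <= `|x|.
Proof.
move=> hw; apply: le_trans (ler_norm _) _.
by rewrite normrM ler_piMr // ler_norml.
Qed.

Section L1Distance.
Variables (R : realType) (S A : finType) (H : nat).
Implicit Types (f g k w : nat -> S -> A -> R).

Definition dist1 f g : R := \sum_(h < H) l1 (fun s a => f h s a - g h s a).

Definition pairing f w : R := \sum_(h < H) \sum_(s : S) \sum_(a : A) f h s a * w h s a.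

Lemma dist1C f g : dist1 f g = dist1 g f.
Proof.
by apply: eq_bigr => h _; apply: eq_bigr => s _; apply: eq_bigr => a _; rewrite distrC.
Qed.

Lemma dist1_triangle f g k : dist1 f k <= dist1 f g + dist1 g k.
Proof.
rewrite -big_split; apply: ler_sum => h _; rewrite /l1 -big_split.
apply: ler_sum => s _; rewrite -big_split; apply: ler_sum => a _ /=.
have -> : f h s a - k h s a = (f h s a - g h s a) + (g h s a - k h s a).
  by rewrite addrA subrK.
exact: ler_normD.
Qed.

Lemma pairing_le_dist1 f g w : (forall h s a, -1 <= w h s a <= 1) ->
  pairing (fun h s a => f h s a - g h s a) w <= dist1 f g.
Proof.
move=> hw; apply: ler_sum => h _; apply: ler_sum => s _; apply: ler_sum => a _.
exact: mulr_le_norm.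
Qed.

Lemma dist1_pairing_sg f g :
  dist1 f g = pairing (fun h s a => f h s a - g h s a)
                      (fun h s a => Num.sg (f h s a - g h s a)).
Proof.
by apply: eq_bigr => h _; apply: eq_bigr => s _; apply: eq_bigr => a _;
  rewrite normrEsg mulrC.
Qed.

End L1Distance.

Section Occupancy.
Variables (R : realType) (S A : finType) (H : nat) (rho : S -> R).
Implicit Types (Q : nat -> S -> A -> S -> R) (pi w : nat -> S -> A -> R).

Lemma occ_distE (dt : nat -> S -> A -> R) Q pi :
  occ_dist H dt rho Q pi = dist1 H dt (occ rho Q pi).
Proof. by []. Qed.

Lemma valueB Q Q' pi pi' w :
  value H rho Q pi w - value H rho Q' pi' w =
  pairing H (fun h s a => occ rho Q pi h s a - occ rho Q' pi' h s a) w.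
Proof.
rewrite /value -sumrB; apply: eq_bigr => h _; rewrite -sumrB.
by apply: eq_bigr => s _; rewrite -sumrB; apply: eq_bigr => a _; rewrite mulrBl.
Qed.

Lemma value_gap_le_dist1 Q Q' pi pi' w : (forall h s a, -1 <= w h s a <= 1) ->
  value H rho Q pi w - value H rho Q' pi' w
    <= dist1 H (occ rho Q pi) (occ rho Q' pi').
Proof. by move=> hw; rewrite valueB pairing_le_dist1. Qed.

Lemma dist1_occ_le_value_gap Q Q' pi pi' (eps : R) :
  (forall w, (forall h s a, -1 <= w h s a <= 1) ->
     `|value H rho Q pi w - value H rho Q' pi' w| <= eps) ->
  dist1 H (occ rho Q pi) (occ rho Q' pi') <= eps.
Proof.
move=> gap; rewrite dist1_pairing_sg -valueB.
apply: le_trans (ler_norm _) (gap _ _) => h s a.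
by rewrite -ler_norml normr_sg lern1 leq_b1.
Qed.

End Occupancy.

Lemma det_policy_is_policy (R : realType) (S A : finType) (piE : nat -> S -> A) :
  is_policy (@det_policy R S A piE).
Proof.
move=> h s; split=> [a|]; first by rewrite /det_policy; case: eqP.
rewrite (bigD1 (piE h s)) //= /det_policy eqxx big1 ?addr0 // => a /negbTE -> //.
Qed.

Lemma imitation_gap_le (R : realType) (S A : finType) (H : nat) (rho : S -> R)
    (P Phat : nat -> S -> A -> S -> R) (r : nat -> S -> A -> R)
    (piE : nat -> S -> A) (dt pibar : nat -> S -> A -> R)
    (eps_RFE eps_EST eps_opt : R) :
  (forall h s a, 0 <= r h s a <= 1) ->
  is_policy pibar ->
  (forall w, (forall h s a, -1 <= w h s a <= 1) ->
     forall pi, is_policy pi ->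
       `|value H rho P pi w - value H rho Phat pi w| <= eps_RFE) ->
  occ_dist H dt rho P (det_policy piE) <= eps_EST ->
  (forall pi, is_policy pi ->
     occ_dist H dt rho Phat pibar <= occ_dist H dt rho Phat pi + eps_opt) ->
  value H rho P (det_policy piE) r - value H rho P pibar r
    <= 2 * eps_EST + 2 * eps_RFE + eps_opt.
Proof.
move=> r01 pibar_pol rfe est opt.
set piD := det_policy piE.
have piD_pol : is_policy piD := det_policy_is_policy R piE.
have r_bounded h s a : -1 <= r h s a <= 1.
  by case/andP: (r01 h s a) => r0 ->; rewrite andbT (le_trans _ r0) ?lerN10.
have model_gap : value H rho Phat pibar r - value H rho P pibar r <= eps_RFE.
  by apply: le_trans (ler_norm _) _; rewrite distrC rfe.
have expert_model_shift : dist1 H (occ rho P piD) (occ rho Phat piD) <= eps_RFE.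
  by apply: dist1_occ_le_value_gap => w hw; apply: rfe.
have learner_cost : occ_dist H dt rho Phat pibar <= eps_EST + eps_RFE + eps_opt.
  apply: le_trans (opt _ piD_pol) _; rewrite lerD2r occ_distE.
  apply: le_trans (dist1_triangle H dt (occ rho P piD) _) _.
  by rewrite lerD // -occ_distE.
have planning_gap : value H rho P piD r - value H rho Phat pibar r
    <= eps_EST + (eps_EST + eps_RFE + eps_opt).
  apply: le_trans (value_gap_le_dist1 H rho P Phat piD pibar r_bounded) _.
  apply: le_trans (dist1_triangle H _ dt _) _.
  by rewrite dist1C -!occ_distE lerD.
lra.
Qed.

Lemma probability_setI_ge (R : realType) (d : measure_display) (T : measurableType d)
    (Pr : probability T R) (E1 E2 : set T) (x y : R) :
  measurable E1 -> measurable E2 ->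
  ((1 - x)%:E <= Pr E1)%E -> ((1 - y)%:E <= Pr E2)%E ->
  ((1 - x - y)%:E <= Pr (E1 `&` E2))%E.
Proof.
move=> mE1 mE2 PE1 PE2.
have union_bound : (Pr (~` E1 `|` ~` E2) <= Pr (~` E1) + Pr (~` E2))%E.
  by apply: measureU2; apply: measurableC.
have mE12 : measurable (E1 `&` E2) by exact: measurableI.
rewrite -setCI !probability_setC // in union_bound.
move: PE1 PE2 union_bound.
rewrite -[Pr E1]fineK ?fin_num_measure // -[Pr E2]fineK ?fin_num_measure //
  -[Pr (E1 `&` E2)]fineK ?fin_num_measure // !lee_fin.
lra.
Qed.

Theorem proposition1 (R : realType) (S A : finType) (H : nat)
  (rho : S -> R) (P : nat -> S -> A -> S -> R) (r : nat -> S -> A -> R)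
  (piE : nat -> S -> A)
  (d : measure_display) (T : measurableType d) (Pr : probability T R)
  (Phat : T -> nat -> S -> A -> S -> R) (dt : T -> nat -> S -> A -> R)
  (pibar : T -> nat -> S -> A -> R)
  (eps_RFE delta_RFE eps_EST delta_EST eps_opt : R) :
  is_dist rho ->
  is_transition P ->
  (forall h s a, 0 <= r h s a <= 1) ->
  (forall om, is_transition (Phat om)) ->
  (forall om, is_policy (pibar om)) ->
  (* (a) *)
  (exists E : set T, [/\ measurable E, ((1 - delta_RFE)%:E <= Pr E)%E &
     forall om, E om ->
       forall w : nat -> S -> A -> R, (forall h s a, -1 <= w h s a <= 1) ->
       forall pi, is_policy pi ->
         `|value H rho P pi w - value H rho (Phat om) pi w| <= eps_RFE]) ->
  (* (b) *)
  (exists E : set T, [/\ measurable E, ((1 - delta_EST)%:E <= Pr E)%E &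
     forall om, E om ->
       occ_dist H (dt om) rho P (det_policy piE) <= eps_EST]) ->
  (* (c) *)
  (forall om pi, is_policy pi ->
     occ_dist H (dt om) rho (Phat om) (pibar om)
       <= occ_dist H (dt om) rho (Phat om) pi + eps_opt) ->
  exists E : set T, [/\ measurable E,
     ((1 - delta_EST - delta_RFE)%:E <= Pr E)%E &
     forall om, E om ->
       value H rho P (det_policy piE) r - value H rho P (pibar om) r
         <= 2 * eps_EST + 2 * eps_RFE + eps_opt].
Proof.
move=> _ _ r01 _ pibar_pol [Ea [mEa PEa rfe]] [Eb [mEb PEb est]] opt.
exists (Eb `&` Ea); split; first exact: measurableI.
  exact: probability_setI_ge.
move=> om [/est est_om /rfe rfe_om].
exact: (imitation_gap_le (Phat:=Phat om) (dt:=dt om) (pibar:=pibar om) r01 (pibar_pol om) rfe_om est_om (opt om)).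
Qed.
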